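(* Let $\Gamma$ be a connected extended Coxeter diagram with all vertex labels finite, and let $H^0=\{x\in\mathbb{C}^I: H_\Gamma(x,y)=0\text{ for all }y\in\mathbb{C}^I\}$ be the kernel of $H_\Gamma$. Then $G_\Gamma$ acts trivially on $H^0$ via $\rho$, and every proper $\rho(G_\Gamma)$-invariant subspace of $\mathbb{C}^I$ is contained in $H^0$.
   Context: An extended Coxeter diagram $\Gamma$ is a finite simplicial graph with vertex set $I$, labels $p_i\in\mathbb{Z}_{\ge2}\cup\{\infty\}$ on vertices and $m_{ij}\in\mathbb{Z}_{\ge3}\cup\{\infty\}$ on edges ($m_{ij}=2$ for non-edges, and $p_i=p_j$ whenever $m_{ij}$ is odd). $G_\Gamma=\langle s_i, i\in I\mid \mathrm{prod}(s_i,s_j;m_{ij})=\mathrm{prod}(s_j,s_i;m_{ij}),\ s_i^{p_i}=1\rangle$, with $\mathrm{prod}(a,b;m)$ the alternating word $aba\cdots$ of length $m$ (relations with $\infty$ omitted). For distinct $i,j$ joined by an edge set $\alpha_{ij}=-\left(\frac{\cos(\pi/p_i-\pi/p_j)+\cos(2\pi/m_{ij})}{2\sin(\pi/p_i)\sin(\pi/p_j)}\right)^{1/2}$; set $\alpha_{ii}=1$ and $\alpha_{ij}=0$ if $i\ne j$ are not joined by an edge. $H_\Gamma=\langle\cdot,\cdot\rangle$ is the Hermitian form on $\mathbb{C}^I$ with basis $\{e_i\}$ given by $\langle e_i,e_j\rangle=\alpha_{ij}$. The representation $\rho=\rho_\Gamma$ of $G_\Gamma$ on $\mathbb{C}^I$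 sends $s_i$ to the complex reflection $R_i(z)=z+(\zeta_{p_i}-1)\langle z,e_i\rangle e_i$, where $\zeta_{p_i}=\exp(2\pi\sqrt{-1}/p_i)$. *)

From mathcomp Require Import all_boot all_order all_algebra.
From mathcomp Require Import complex.
From mathcomp Require Import reals trigo.
Set Implicit Arguments. Unset Strict Implicit. Unset Printing Implicit Defensive.
Import Order.TTheory GRing.Theory Num.Theory.
Local Open Scope ring_scope.
Local Open Scope complex_scope.

Section CoxeterDefs.
Variable R : realType.
Variable n : nat.

(* Edge labels m : 'I_n -> 'I_n -> option nat, with [None] standing for infinity
   and [Some 2] meaning "no edge". *)
Definition is_edge (m : 'I_n -> 'I_n -> option nat) : rel 'I_n :=
  fun i j => (i != j) && (m i j != Some 2%N).

(* cos(2 pi / m), with 2 pi / infinity = 0 *)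
Definition cos2pi_over (o : option nat) : R :=
  match o with None => 1 | Some k => cos (2 * pi / k%:R) end.

Definition alpha (p : 'I_n -> nat) (m : 'I_n -> 'I_n -> option nat)
  (i j : 'I_n) : R :=
  if i == j then 1
  else if is_edge m i j then
    - Num.sqrt ((cos (pi / (p i)%:R - pi / (p j)%:R) + cos2pi_over (m i j))
                / (2 * sin (pi / (p i)%:R) * sin (pi / (p j)%:R)))
  else 0.

Definition Hform p m (z w : 'rV[R[i]]_n) : R[i] :=
  \sum_(j < n) \sum_(k < n) z 0 j * (alpha p m j k)%:C * (w 0 k)^*.

Definition zeta (q : nat) : R[i] :=
  (cos (2 * pi / q%:R)) +i* (sin (2 * pi / q%:R)).

(* Matrix of the complex reflection R_i acting on row vectors (z |-> z *m M):
   R_i(z) = z + (zeta_{p_i} - 1) <z, e_i> e_i, where <z,e_i> = sum_j z_j alpha_ji. *)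
Definition refl_mx p m (i : 'I_n) : 'M[R[i]]_n :=
  \matrix_(j, k) ((j == k)%:R
                  + (zeta (p i) - 1) * (alpha p m j i)%:C * (k == i)%:R).

(* The image rho(G_Gamma): the group generated by the matrices R_i. *)
Inductive in_rhoG p m : 'M[R[i]]_n -> Prop :=
  | rhoG1 : in_rhoG p m 1%:M
  | rhoG_mul i g : in_rhoG p m g -> in_rhoG p m (refl_mx p m i *m g)
  | rhoG_inv i g : in_rhoG p m g -> in_rhoG p m (invmx (refl_mx p m i) *m g).

Definition ext_coxeter_diagram (p : 'I_n -> nat) (m : 'I_n -> 'I_n -> option nat) :=
  [/\ forall i, (2 <= p i)%N,
      forall i j, m i j = m j i,
      forall i j, i != j -> m i j = None \/ exists2 k, m i j = Some k & (2 <= k)%N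
    & forall i j k, i != j -> m i j = Some k -> odd k -> p i = p j].

Definition connected_diagram (m : 'I_n -> 'I_n -> option nat) :=
  forall i j, connect (is_edge m) i j.

Definition in_H0 p m (x : 'rV[R[i]]_n) := forall y, Hform p m x y = 0.

End CoxeterDefs.

(* The generator s_i acts by R_i(z) = z + (zeta_{p_i} - 1) <z, e_i> e_i, so every
   vector of H^0 is fixed.  Conversely, if an invariant subspace U contains z with
   <z, e_i> <> 0, then R_i(z) - z is a nonzero multiple of e_i, so e_i lies in U.
   Along an edge, <e_i, e_j> = alpha_ij < 0, so the same argument moves from e_i
   to e_j; by connectedness U then contains every e_j and is the whole space. *)

From mathcomp Require Import all_boot all_order all_algebra.
From mathcomp Require Import complex.
From mathcomp Require Import reals trigo.
From mathcomp Require Import ring lra.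
Import Order.TTheory GRing.Theory Num.Theory.
Set Implicit Arguments. Unset Strict Implicit.
Local Open Scope ring_scope.
Local Open Scope complex_scope.

Section PiOverNat.
Variable R : realType.
Implicit Types (k q : nat).

Lemma pi_div_natr_gt0 q : (0 < q)%N -> 0 < pi / q%:R :> R.
Proof. by move=> q0; rewrite divr_gt0 ?pi_gt0 ?ltr0n. Qed.

Lemma pi_div_natr_le k q : (0 < k)%N -> (k <= q)%N -> pi / q%:R <= pi / k%:R :> R.
Proof.
move=> k0 kq; rewrite ler_pM2l ?pi_gt0 // lef_pV2 ?posrE ?ltr0n ?ler_nat //.
exact: leq_trans kq.
Qed.

Lemma sin_pi_div_natr_gt0 q : (2 <= q)%N -> 0 < sin (pi / q%:R) :> R.
Proof.
move=> q2; have x0 := pi_div_natr_gt0 (ltnW q2).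
have := pi_div_natr_le (k := 2) isT q2 => xle.
by apply: sin_gt0_pi; rewrite x0 /=; have := @pi_gt0 R; lra.
Qed.

Lemma cos_pi_div_natr_gt0 q : (3 <= q)%N -> 0 < cos (pi / q%:R) :> R.
Proof.
move=> q3; have x0 := pi_div_natr_gt0 (ltnW (ltnW q3)).
have := pi_div_natr_le (k := 3) isT q3 => xle.
by apply: cos_gt0_pihalf; apply/andP; split; have := @pi_gt0 R; lra.
Qed.

Lemma cos_2pi_div_natr_ge0 q : (4 <= q)%N -> 0 <= cos (2 * pi / q%:R) :> R.
Proof.
move=> q4; have x0 := pi_div_natr_gt0 (ltnW (ltnW (ltnW q4))).
have := pi_div_natr_le (k := 4) isT q4 => xle.
by rewrite -mulrA; apply: cos_ge0_pihalf; apply/andP; split; have := @pi_gt0 R; lra.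
Qed.

Lemma cos_sub_pi_div_natr_gt0 k q : (2 <= k)%N -> (2 <= q)%N ->
  0 < cos (pi / k%:R - pi / q%:R) :> R.
Proof.
move=> k2 q2; have k0 := pi_div_natr_gt0 (ltnW k2).
have q0 := pi_div_natr_gt0 (ltnW q2).
have := pi_div_natr_le (k := 2) isT k2.
have := pi_div_natr_le (k := 2) isT q2.
by move=> ? ?; apply: cos_gt0_pihalf; apply/andP; split; lra.
Qed.

Lemma cos_2pi_div_natr q : cos (2 * pi / q%:R) = cos (pi / q%:R) ^+ 2 *+ 2 - 1 :> R.
Proof. by rewrite -cos_mulr2n mulr2n mulrDl mulrDl mul1r. Qed.

(* Re (zeta q) = 1 - 2 sin^2 (pi / q) < 1. *)
Lemma zeta_neq1 q : (2 <= q)%N -> zeta R q != 1.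
Proof.
move=> q2; apply/eqP => /(congr1 (@complex.Re R)) /=.
rewrite cos_2pi_div_natr cos2sin2.
by have := sin_pi_div_natr_gt0 q2; set s := sin _; nra.
Qed.

End PiOverNat.

Section Alpha.
Variables (R : realType) (n : nat) (p : 'I_n -> nat) (m : 'I_n -> 'I_n -> option nat).
Hypothesis diagram : ext_coxeter_diagram p m.

Lemma edge_cos_sum_gt0 i j : is_edge m i j ->
  0 < cos (pi / (p i)%:R - pi / (p j)%:R) + cos2pi_over R (m i j).
Proof.
case: diagram => p2 _ m_label p_odd /[dup] /andP [ij m_ne2] _.
have := m_label i j ij; case=> [->|[k m_k k2]].
  by rewrite /= addr_gt0 ?cos_sub_pi_div_natr_gt0.
rewrite m_k /=; have k3 : (3 <= k)%N.
  by move: m_ne2 k2; rewrite m_k; case: k {m_k} => [|[|[|]]].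
case k_odd: (odd k).
  (* odd labels force p_i = p_j, and then the sum is 2 cos^2 (pi / k) > 0 *)
  rewrite (p_odd i j k ij m_k k_odd) subrr cos0 cos_2pi_div_natr.
  by have := cos_pi_div_natr_gt0 R k3; set c := cos _; nra.
have k4 : (4 <= k)%N by move: k3 k_odd; case: k {m_k k2} => [|[|[|[|]]]].
by rewrite ltr_wpDr ?cos_2pi_div_natr_ge0 ?cos_sub_pi_div_natr_gt0.
Qed.

Lemma alpha_edge_lt0 i j : is_edge m i j -> alpha R p m i j < 0.
Proof.
case: diagram => p2 _ _ _ /[dup] /andP [ij _] ij_edge.
rewrite /alpha (negbTE ij) ij_edge oppr_lt0 sqrtr_gt0 divr_gt0 ?edge_cos_sum_gt0 //.
by rewrite !mulr_gt0 ?sin_pi_div_natr_gt0.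
Qed.

End Alpha.

Lemma mulmx_invmx_fixed (F : comUnitRingType) (k l : nat) (x : 'M[F]_(k, l)) A :
  x *m A = x -> x *m invmx A = x.
Proof.
move=> xA; case: (boolP (A \in unitmx)) => [A_unit | /invmx_out -> //].
by rewrite -{1}xA -mulmxA mulmxV // mulmx1.
Qed.

Section Reflections.
Variables (R : realType) (n : nat) (p : 'I_n -> nat) (m : 'I_n -> 'I_n -> option nat).
Local Notation e k := (delta_mx 0 k : 'rV[R[i]]_n).

Lemma Hform_deltar u k :
  Hform p m u (e k) = \sum_(j < n) u 0 j * (alpha R p m j k)%:C.
Proof.
apply: eq_bigr => j _; rewrite (bigD1 k) //= big1 => [|l lk].
  by rewrite mxE !eqxx /= rmorph1 mulr1 addr0.
by rewrite mxE (negbTE lk) andbF rmorph0 mulr0.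
Qed.

Lemma HformE u y : Hform p m u y = \sum_(k < n) Hform p m u (e k) * (y 0 k)^*.
Proof.
by under [RHS]eq_bigr do rewrite Hform_deltar mulr_suml; rewrite exchange_big.
Qed.

Lemma in_H0P u : in_H0 p m u <-> forall k, Hform p m u (e k) = 0.
Proof.
split=> [u0 k | u0 y]; first exact: u0.
by rewrite HformE big1 // => k _; rewrite u0 mul0r.
Qed.

Lemma Hform_delta i k : Hform p m (e i) (e k) = (alpha R p m i k)%:C.
Proof.
rewrite Hform_deltar (bigD1 i) //= big1 => [|j ji]; first by rewrite mxE !eqxx mul1r addr0.
by rewrite mxE (negbTE ji) andbF mul0r.
Qed.

Lemma refl_mxE u i :
  u *m refl_mx R p m i = u + ((zeta R (p i) - 1) * Hform p m u (e i)) *: e i.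
Proof.
apply/rowP => k; rewrite !mxE.
under eq_bigr do rewrite mxE mulrDr.
rewrite big_split /= (bigD1 k) //= eqxx mulr1 big1 => [|j /negbTE]; last first.
  by rewrite eq_sym => ->; rewrite mulr0.
rewrite addr0 Hform_deltar mulr_sumr mulr_suml; congr (_ + _).
by apply: eq_bigr => j _; ring.
Qed.

Lemma H0_refl_fixed x i : in_H0 p m x -> x *m refl_mx R p m i = x.
Proof. by move=> /in_H0P x0; rewrite refl_mxE x0 mulr0 scale0r addr0. Qed.

Lemma in_rhoG_fixed (x : 'rV[R[i]]_n) g :
  (forall i, x *m refl_mx R p m i = x) -> in_rhoG p m g -> x *m g = x.
Proof.
move=> x_fixed; elim=> [|i {}g _ IH|i {}g _ IH]; first by rewrite mulmx1.
  by rewrite mulmxA x_fixed IH.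
by rewrite mulmxA mulmx_invmx_fixed.
Qed.

Hypothesis diagram : ext_coxeter_diagram p m.
Variable U : 'M[R[i]]_n.
Hypothesis U_refl_stable : forall i, (U *m refl_mx R p m i <= U)%MS.

Lemma delta_sub_of_Hform_neq0 u i :
  (u <= U)%MS -> Hform p m u (e i) != 0 -> (e i <= U)%MS.
Proof.
move=> uU ui0; have p2 : (2 <= p i)%N by case: diagram.
have : (u *m refl_mx R p m i - u <= U)%MS.
  by rewrite addmx_sub ?eqmx_opp // (submx_trans (submxMr _ uU)).
by rewrite refl_mxE addrAC subrr add0r eqmx_scale // mulf_neq0 // subr_eq0 zeta_neq1.
Qed.

Lemma delta_sub_edge i j : is_edge m i j -> (e i <= U)%MS -> (e j <= U)%MS.
Proof.
move=> ij /delta_sub_of_Hform_neq0; apply.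
by rewrite Hform_delta fmorph_eq0 lt_eqF // alpha_edge_lt0.
Qed.

Lemma row_full_of_delta_sub i : connected_diagram m -> (e i <= U)%MS -> row_full U.
Proof.
move=> connected iU; rewrite -sub1mx; apply/row_subP => j; rewrite row1.
have /connectP [s path_s ->] := connected i j.
elim: s i iU path_s => [|k s IH] i iU //= /andP [ik path_s].
exact: IH (delta_sub_edge ik iU) path_s.
Qed.

Lemma sub_H0_of_rank_lt x : connected_diagram m -> (\rank U < n)%N ->
  (x <= U)%MS -> in_H0 p m x.
Proof.
move=> connected rkU xU; apply/in_H0P => k; apply/eqP; apply: contraTT rkU.
move=> /(delta_sub_of_Hform_neq0 xU) /(row_full_of_delta_sub connected) /eqP ->.
by rewrite ltnn.
Qed.

End Reflections.

Theorem lemma2p3 (R : realType) (n : nat)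
  (p : 'I_n -> nat) (m : 'I_n -> 'I_n -> option nat) :
  ext_coxeter_diagram p m -> connected_diagram m ->
  (forall g : 'M[R[i]]_n, in_rhoG p m g ->
     forall x, in_H0 p m x -> x *m g = x) /\
  (forall U : 'M[R[i]]_n,
     (forall g, in_rhoG p m g -> (U *m g <= U)%MS) ->
     (\rank U < n)%N ->
     forall x : 'rV[R[i]]_n, (x <= U)%MS -> in_H0 p m x).
Proof.
move=> diagram connected; split.
  by move=> g g_in x x0; apply: in_rhoG_fixed g_in => i; exact: H0_refl_fixed.
move=> U U_stable rkU x; apply: sub_H0_of_rank_lt connected rkU => // i.
by have := U_stable _ (rhoG_mul i (@rhoG1 R n p m)); rewrite mulmx1.
Qed.
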